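(* Let $\mathcal T$ be a trie with $n$ nodes over an alphabet $\Sigma$ of size $\sigma$ and let $k\ge0$ be an integer. Then it is possible to represent $\mathcal T$ (i.e., encode it so that it can be uniquely reconstructed) in a number of bits upper-bounded by $n\mathcal H_k(\mathcal T)+2+(\sigma+1)\sigma^k\lceil\log n\rceil$.
   Context: A trie over a finite totally ordered alphabet $\Sigma$ is a rooted ordered tree with edges labeled by symbols of $\Sigma$ such that edges leaving the same node have distinct labels and siblings are ordered by their incoming labels. For a node $u$, $out(u)$ is the set of labels of edges leaving $u$; $\lambda(u)$ is the label of the edge entering $u$, with $\lambda(\text{root})=\#$, a new symbol not in $\Sigma$; $\pi(u)$ is the parent of $u$, with $\pi(\text{root})=\text{root}$. The $k$-th order context is $\lambda_0(u)=\epsilon$ and $\lambda_k(u)=\lambda_{k-1}(\pi(u))\cdot\lambda(u)$ (so it consists of the last $k$ labels on the root-to-$u$ path, left-padded with $\#$ if the depth of $u$ is less than $k$). For a length-$k$ string $w$ and $c\in\Sigma$, $n_w=|\{u:\lambda_k(u)=w\}|$ and $n_{w,c}=|\{u:\lambda_k(u)=w,\ c\in out(u)\}|$. Logarithms are base 2 and $0\log(x/0)=0$. The $k$-th order empirical entropy is $\mathcal H_k(\mathcal T)=\sum_{w}\sum_{c\in\Sigma}\left[\frac{n_{w,c}}{n}\log\frac{n_w}{n_{w,c}}+\frac{n_w-n_{w,c}}{n}\log\frac{n_w}{n_w-n_{w,c}}\right]$, the outer sum ranging over all length-$k$ contexts $w$ with $n_w>0$. *)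

From Stdlib Require Rdefinitions Rpower.
From HB Require Import structures.
From mathcomp Require Import all_boot all_order all_algebra.
From mathcomp Require Import finmap.
From mathcomp Require Import Rstruct.
Set Implicit Arguments. Unset Strict Implicit. Unset Printing Implicit Defensive.
Import GRing.Theory Num.Theory.
Local Open Scope ring_scope.
Local Open Scope fset_scope.

(* A trie is represented by the finite set of strings spelled by its
   root-to-node paths: a node u is identified with its path label, the root
   is [::], pi(u) = take (size u).-1 u (pi(root) = root), lambda(u) = last
   symbol of u.  Siblings are ordered by their labels,
   so the ordered labelled tree is determined by this set. *)
Definition parent (sigma : nat) (u : seq 'I_sigma) : seq 'I_sigma :=
  take (size u).-1 u.

Definition is_trie (sigma : nat) (S : {fset (seq 'I_sigma)}) : bool :=
  ([::] \in S) && [forall u : S, parent (val u) \in S].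

Definition nnodes (sigma : nat) (S : {fset (seq 'I_sigma)}) : nat := #|` S|.

Definition out (sigma : nat) (S : {fset (seq 'I_sigma)}) (u : seq 'I_sigma)
  (c : 'I_sigma) : bool := rcons u c \in S.

(* Symbols of Sigma ∪ {#}: Some c is c, None is the new symbol #.
   k-th order context: the last k labels of the root-to-u path, left padded
   with # when depth(u) < k  (this is exactly lambda_k(u) of the paper, since
   lambda(root) = # and pi(root) = root). *)
Definition ctx (sigma k : nat) (u : seq 'I_sigma) : seq (option 'I_sigma) :=
  nseq (k - size u) None ++ map Some (drop (size u - k) u).

Definition n_w (sigma k : nat) (S : {fset (seq 'I_sigma)})
  (w : seq (option 'I_sigma)) : nat :=
  #|` [fset u in S | ctx k u == w]|.

Definition n_wc (sigma k : nat) (S : {fset (seq 'I_sigma)})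
  (w : seq (option 'I_sigma)) (c : 'I_sigma) : nat :=
  #|` [fset u in S | (ctx k u == w) && out S u c]|.

Definition log2 (x : Rdefinitions.R) : Rdefinitions.R := Rpower.ln x / Rpower.ln 2.

Definition hterm (n a b : nat) : Rdefinitions.R :=
  if b == 0%N then 0%R else (b%:R / n%:R * log2 (a%:R / b%:R))%R.

Definition contexts (sigma k : nat) (S : {fset (seq 'I_sigma)})
  : seq (seq (option 'I_sigma)) :=
  undup [seq ctx k u | u <- enum_fset S].

Definition Hk (sigma k : nat) (S : {fset (seq 'I_sigma)}) : Rdefinitions.R :=
  (\sum_(w <- contexts k S) \sum_(c < sigma)
     (hterm (nnodes S) (n_w k S w) (n_wc k S w c)
      + hterm (nnodes S) (n_w k S w) (n_w k S w - n_wc k S w c)))%R.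

(* The code of an n-node trie has three parts.  The membership bits of all
   strings of length 1 .. min(k, n-1) fix every node of depth at most k, hence
   every count n_w, n_{w,c} with # in w.  The counts n_{w,c} with w in Sigma^k
   take ceil(log n) bits each; as the nodes of context w.a are exactly the
   a-children of the nodes whose context ends with w, they also fix the
   remaining n_w.  Finally, list the nodes in breadth-first order and let
   B_{w,c} tell which of the n_w nodes of context w have a c-child: these bit
   vectors rebuild the trie depth by depth, and (B_{w,c}) is one of the
   prod C(n_w, n_{w,c}) families with the known lengths and weights, so its rank
   costs ceil(log prod C(n_w, n_{w,c})) bits.  The estimate
   C(N, M) <= N^N / (M^M (N-M)^(N-M)) bounds that logarithm by n H_k(T), and a
   geometric sum bounds the first part by 1 + sigma^k ceil(log n) when sigma > 1.
   Over an alphabet with at most one letter a trie is determined by its size,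
   so the empty code works. *)

From Stdlib Require Rdefinitions Rpower.
From HB Require Import structures.
From mathcomp Require Import all_boot all_order all_algebra.
From mathcomp Require Import finmap.
From mathcomp Require Import Rstruct.
From mathcomp Require Import zify ring lra.
Import Order.TTheory GRing.Theory Num.Theory.
Set Implicit Arguments. Unset Strict Implicit. Unset Printing Implicit Defensive.
Local Open Scope fset_scope.

Fixpoint binary (W x : nat) : seq bool :=
  if W is W'.+1 then odd x :: binary W' x./2 else [::].

Lemma size_binary W x : size (binary W x) = W.
Proof. by elim: W x => //= W IH x; rewrite IH. Qed.

Lemma binary_inj W x y : x < 2 ^ W -> y < 2 ^ W -> binary W x = binary W y -> x = y.
Proof.
elim: W x y => [|W IH] x y /=.
  by rewrite expn0 !ltnS !leqn0 => /eqP -> /eqP ->.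
have half_lt z : z < 2 ^ W.+1 -> z./2 < 2 ^ W by rewrite -divn2 ltn_divLR // -expnSr.
move=> /half_lt hx /half_lt hy [eq_odd eq_half].
by rewrite -(odd_double_half x) -(odd_double_half y) eq_odd (IH _ _ hx hy eq_half).
Qed.

Fixpoint bitseqs (N M : nat) : seq bitseq :=
  if N is N'.+1 then
    (if M is M'.+1 then map (cons true) (bitseqs N' M') else [::])
      ++ map (cons false) (bitseqs N' M)
  else if M == 0 then [:: [::]] else [::].

Lemma size_bitseqs N M : size (bitseqs N M) = 'C(N, M).
Proof.
elim: N M => [|N IH] [|M] //=; rewrite ?size_cat !size_map ?IH ?bin0 //.
by rewrite binS addnC.
Qed.

Lemma mem_bitseqs (s : bitseq) : s \in bitseqs (size s) (count id s).
Proof.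
elim: s => [|[] s IH] //=; rewrite mem_cat; apply/orP; [left | right]; exact: map_f.
Qed.

Definition bitseq_families (ps : seq (nat * nat)) : seq (seq bitseq) :=
  foldr (fun p fams => [seq b :: f | b <- bitseqs p.1 p.2, f <- fams]) [:: [::]] ps.

Lemma size_bitseq_families ps :
  size (bitseq_families ps) = \prod_(p <- ps) 'C(p.1, p.2).
Proof.
elim: ps => [|p ps IH]; first by rewrite big_nil.
by rewrite big_cons /= size_allpairs size_bitseqs IH.
Qed.

Lemma mem_bitseq_families (fam : seq bitseq) :
  fam \in bitseq_families [seq (size s, count id s) | s <- fam].
Proof.
elim: fam => [|s fam IH] /=; first by rewrite inE.
by apply/allpairsP; exists (s, fam); rewrite mem_bitseqs.
Qed.

Lemma bin_mul_expn_leq N M : 'C(N, M) * (M ^ M * (N - M) ^ (N - M)) <= N ^ N.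
Proof.
have [leMN | ltNM] := leqP M N; last by rewrite bin_small.
rewrite -[X in _ <= X ^ _](subnK leMN) expnDn (bigD1 (Ordinal (leMN : M < N.+1))) //=.
by rewrite [M ^ M * _]mulnC leq_addr.
Qed.

Lemma sorted_relpre_split (T : eqType) (f : T -> nat) (s : seq T) L :
  sorted (relpre f leq) s -> s = [seq x <- s | f x <= L] ++ [seq x <- s | L < f x].
Proof.
elim: s => //= x s IH path_s.
have ge_x := allP (order_path_min (fun y x z => @leq_trans (f y) (f x) (f z)) path_s).
case: leqP => [_ | lt_L] /=; first by rewrite -IH // (path_sorted path_s).
rewrite (@eq_in_filter _ _ pred0) ?filter_pred0; last by move=> y /ge_x /=; lia.
by rewrite (@eq_in_filter _ _ predT) ?filter_predT // => y /ge_x /=; lia.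
Qed.

Section BigSubset.
Local Open Scope ring_scope.

Lemma big_uniq_subset (V : nmodType) (T : eqType) (s t : seq T) (F : T -> V) :
  uniq s -> uniq t -> {subset s <= t} -> (forall x, x \notin s -> F x = 0) ->
  \sum_(x <- s) F x = \sum_(x <- t) F x.
Proof.
move=> uniq_s uniq_t sub_st F_out.
rewrite [RHS](bigID (mem s)) /= [X in _ + X]big1 ?addr0 => [|x /F_out //].
rewrite -[RHS]big_filter; apply: perm_big; apply: uniq_perm; rewrite ?filter_uniq // => x.
by rewrite mem_filter andb_idr //; exact: sub_st.
Qed.
End BigSubset.

Lemma card_sep_fset (T : choiceType) (A : {fset T}) (P : pred T) :
  #|` [fset x in A | P x]| = count P A.
Proof.
rewrite -size_filter; apply/perm_size/uniq_perm; rewrite ?filter_uniq //.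
by move=> x; rewrite !inE mem_filter andbC.
Qed.

Lemma count_mem_fset (T : choiceType) (E : seq T) (A : {fset T}) (P : pred T) :
  uniq E -> {subset A <= E} -> count (fun x => (x \in A) && P x) E = count P A.
Proof.
move=> uniq_E sub_AE; rewrite -!size_filter; apply/perm_size/uniq_perm.
- exact: filter_uniq.
- exact: filter_uniq.
move=> x; rewrite !mem_filter; case xA: (x \in A); rewrite ?andbF //=.
by rewrite (sub_AE _ xA) !andbT.
Qed.

Lemma count_partition (T : Type) (J : finType) (f : T -> J) (P : pred T) (s : seq T) :
  count P s = \sum_(j : J) count (fun x => P x && (f x == j)) s.
Proof.
elim: s => [|x s IH] /=; first by rewrite big1.
rewrite big_split /= -IH; congr addn; case: (P x) => /=; last by rewrite big1.
by rewrite (bigD1 (f x)) //= eqxx big1 // => j /negbTE; rewrite eq_sym => ->.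
Qed.

Lemma map_Some_pmap (T : eqType) (w : seq (option T)) :
  None \notin w -> map Some (pmap id w) = w.
Proof. by elim: w => //= -[a|] w IH; rewrite inE //= => /IH ->. Qed.

Lemma sum_expn_iota1_le b j : 1 < b -> \sum_(d <- iota 1 j) b ^ d + 2 <= 2 * b ^ j.
Proof.
move=> b_gt1; elim: j => [|j IH]; first by rewrite big_nil.
rewrite -[j.+1]addn1 iotaD big_cat /= big_seq1 add1n addn1.
have : 2 * b ^ j <= b ^ j.+1 by rewrite expnS leq_mul2r b_gt1 orbT.
lia.
Qed.

Section Words.
Variable A : finType.

Definition words d : seq (seq A) := [seq tval t | t : d.-tuple A].

Lemma mem_words d (u : seq A) : (u \in words d) = (size u == d).
Proof.
apply/mapP/eqP => [[t _ ->] | hu]; first exact: size_tuple.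
by exists (Tuple (introT eqP hu)); rewrite ?mem_enum.
Qed.

Lemma size_words d : size (words d) = #|A| ^ d.
Proof. by rewrite size_map -cardE card_tuple. Qed.

Lemma uniq_words d : uniq (words d).
Proof. by rewrite map_inj_uniq ?enum_uniq //; exact: val_inj. Qed.

End Words.

Section Tries.
Variable sigma : nat.
Implicit Types (S : {fset (seq 'I_sigma)}) (u v : seq 'I_sigma).

Lemma parent_rcons u c : parent (rcons u c) = u.
Proof. by rewrite /parent size_rcons /= -cats1 take_size_cat. Qed.

Lemma trie_nil S : is_trie S -> [::] \in S.
Proof. by case/andP. Qed.

Lemma trie_rcons S u c : is_trie S -> rcons u c \in S -> u \in S.
Proof. by case/andP => _ /forallP hS hu; rewrite -(parent_rcons u c) (hS [` hu]). Qed.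

Lemma trie_take S u i : is_trie S -> u \in S -> take i u \in S.
Proof.
move=> hS; elim/last_ind: u => [|u c IH] hu; first by rewrite trie_nil.
have [le_iu | lt_ui] := leqP i (size u); last by rewrite take_oversize ?size_rcons.
have hu' := trie_rcons hS hu.
rewrite -cats1 take_cat; case: ltnP => [_ | ge_iu]; first exact: IH.
have -> : i = size u by lia.
by rewrite subnn take0 cats0.
Qed.

Lemma size_lt_card_trie S u : is_trie S -> u \in S -> size u < #|` S|.
Proof.
move=> hS hu; pose prefixes := [seq take i u | i <- iota 0 (size u).+1].
have uniq_prefixes : uniq prefixes.
  rewrite map_inj_in_uniq ?iota_uniq // => i j; rewrite !mem_iota !add0n !ltnS.
  by move=> hi hj /(congr1 size); rewrite !size_takel.
have sub_prefixes : {subset prefixes <= S}.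
  by move=> _ /mapP [i _ ->]; exact: trie_take.
by have := uniq_leq_size uniq_prefixes sub_prefixes; rewrite size_map size_iota.
Qed.

Lemma size_ctx k u : size (ctx k u) = k.
Proof. by rewrite /ctx size_cat size_nseq size_map size_drop; lia. Qed.

Lemma ctx0 u : ctx 0 u = [::].
Proof. by apply/size0nil; rewrite size_ctx. Qed.

Lemma ctx_rcons k u c : 0 < k -> ctx k (rcons u c) = rcons (ctx k.-1 u) (Some c).
Proof.
move=> k_gt0; rewrite /ctx size_rcons.
have [le_k | lt_k] := leqP k (size u).+1.
  have -> : k - (size u).+1 = 0 by lia.
  have -> : k.-1 - size u = 0 by lia.
  have -> : size u - k.-1 = (size u).+1 - k by lia.
  by rewrite drop_rcons ?map_rcons //; lia.
have -> : (size u).+1 - k = 0 by lia.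
have -> : size u - k.-1 = 0 by lia.
have -> : k - (size u).+1 = k.-1 - size u by lia.
by rewrite !drop0 rcons_cat map_rcons.
Qed.

Lemma ctx_pred k u : 0 < k -> ctx k.-1 u = behead (ctx k u).
Proof.
move=> k_gt0; rewrite /ctx.
have [lt_uk | le_ku] := ltnP (size u) k.
  have -> : k - size u = (k.-1 - size u).+1 by lia.
  have -> : size u - k = 0 by lia.
  by have -> : size u - k.-1 = 0 by lia.
have -> : k - size u = 0 by lia.
have -> : k.-1 - size u = 0 by lia.
rewrite /= behead_map -drop1 drop_drop.
by have -> : (1 + (size u - k))%N = size u - k.-1 by lia.
Qed.

Lemma None_in_ctx k u : (None \in ctx k u) = (size u < k).
Proof.
rewrite /ctx mem_cat mem_nseq; have /negbTE -> : None \notin map Some (drop (size u - k) u).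
  by apply/mapP => -[].
by rewrite orbF andbT subn_gt0.
Qed.

End Tries.

Section Reconstruction.
Variables (sigma : nat) (K : eqType) (key : seq 'I_sigma -> K).
Implicit Types (S : {fset (seq 'I_sigma)}) (E : seq (seq 'I_sigma)).

Definition trie_block E S (w : K) (c : 'I_sigma) : seq bool :=
  [seq rcons u c \in S | u <- E & (u \in S) && (key u == w)].

(* Induction on depth: as E lists shorter strings first, the rank of a node u
   among the nodes of E with key [key u] only depends on the strings no longer
   than u, on which S1 and S2 already agree. *)
Lemma trie_eq_of_blocks E S1 S2 :
  is_trie S1 -> is_trie S2 -> sorted (relpre size leq) E ->
  {subset S1 <= E} -> {subset S2 <= E} ->
  (forall w c, trie_block E S1 w c = trie_block E S2 w c) -> S1 = S2.
Proof.
move=> trie1 trie2 sorted_E sub1 sub2 eq_blocks.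
suff agree L y : size y <= L -> (y \in S1) = (y \in S2).
  by apply/fsetP => y; exact: (agree (size y)).
elim: L y => [|L IH] y.
  by rewrite leqn0 => /nilP ->; rewrite !trie_nil.
rewrite leq_eqVlt ltnS => /orP [/eqP size_y | /IH //].
case/lastP: y size_y => [//|u c]; rewrite size_rcons => -[size_u].
have [u1 | u1] := boolP (u \in S1); last first.
  have u2 : u \notin S2 by rewrite -IH ?size_u.
  by rewrite (negbTE (contra (trie_rcons trie1) u1)) (negbTE (contra (trie_rcons trie2) u2)).
have u2 : u \in S2 by rewrite -IH ?size_u.
have := eq_blocks (key u) c.
rewrite /trie_block (sorted_relpre_split L sorted_E) !filter_cat !map_cat.
set short := [seq v <- E | size v <= L].
have -> : [seq v <- short | (v \in S2) && (key v == key u)]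
        = [seq v <- short | (v \in S1) && (key v == key u)].
  by apply: eq_in_filter => v; rewrite mem_filter => /andP [/IH -> _].
move=> /eqP; rewrite eqseq_cat ?size_map //.
case/andP => /eqP /eq_in_map agree_short _; apply: agree_short.
by rewrite !mem_filter u1 eqxx size_u leqnn sub1.
Qed.

End Reconstruction.

Section Log2.
Local Open Scope ring_scope.

Let natr_gt0 (x : nat) : (0 < x)%N -> Rdefinitions.Rlt 0 x%:R.
Proof. by move=> x_gt0; apply/RltP; rewrite ltr0n. Qed.

Let ln_1 : Rpower.ln 1 = 0.
Proof. exact: Rpower.ln_1. Qed.

Lemma ln2_gt0 : 0 < Rpower.ln 2.
Proof.
by rewrite -ln_1; apply/RltP/Rpower.ln_increasing; apply/RltP; rewrite ?ltr01 ?ltr1n.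
Qed.

Lemma log2_1 : log2 1 = 0.
Proof. by rewrite /log2 ln_1 mul0r. Qed.

Lemma log2_natM x y : (0 < x)%N -> (0 < y)%N ->
  log2 (x * y)%:R = log2 x%:R + log2 y%:R.
Proof.
by move=> x_gt0 y_gt0; rewrite /log2 natrM Rpower.ln_mult ?mulrDl //; exact: natr_gt0.
Qed.

Lemma log2_natX x e : (0 < x)%N -> log2 (x ^ e)%:R = e%:R * log2 x%:R.
Proof.
by move=> x_gt0; rewrite /log2 natrX -RpowE Rpower.ln_pow ?INRE ?mulrA //; exact: natr_gt0.
Qed.

Lemma log2_div_nat x y : (0 < x)%N -> (0 < y)%N ->
  log2 (x%:R / y%:R) = log2 x%:R - log2 y%:R.
Proof.
move=> x_gt0 y_gt0; rewrite /log2 -mulrBl; congr (_ / _).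
have -> : x%:R / y%:R = Rdefinitions.Rmult x%:R (Rdefinitions.Rinv y%:R) by [].
rewrite Rpower.ln_mult ?Rpower.ln_Rinv //; try exact: natr_gt0.
by apply: Stdlib.Reals.RIneq.Rinv_0_lt_compat; exact: natr_gt0.
Qed.

Lemma log2_nat_prod (I : Type) (r : seq I) (F : I -> nat) :
  (forall i, 0 < F i)%N -> log2 (\prod_(i <- r) F i)%:R = \sum_(i <- r) log2 (F i)%:R.
Proof.
move=> F_gt0; elim: r => [|i r IH]; first by rewrite !big_nil log2_1.
by rewrite !big_cons log2_natM ?IH ?prodn_gt0.
Qed.

Lemma ler_log2_nat x y : (0 < x)%N -> (x <= y)%N -> log2 x%:R <= log2 y%:R.
Proof.
move=> x_gt0; rewrite leq_eqVlt => /orP [/eqP -> // | lt_xy].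
rewrite ler_pM2r ?invr_gt0 ?ln2_gt0 //; apply/ltW/RltP/Rpower.ln_increasing.
  exact: natr_gt0.
by apply/RltP; rewrite ltr_nat.
Qed.

Lemma log2_nat_ge0 x : (0 < x)%N -> 0 <= log2 x%:R.
Proof. by move=> x_gt0; have := @ler_log2_nat 1 x isT x_gt0; rewrite log2_1. Qed.

Lemma up_log2_le m : (0 < m)%N -> (up_log 2 m)%:R <= 1 + log2 m%:R.
Proof.
move=> m_gt0; have [le_m1 | lt_1m] := leqP m 1.
  have -> : m = 1%N by lia.
  by rewrite up_log1 log2_1 addr0.
have pow_gt0 : (0 < 2 ^ (up_log 2 m).-1)%N by rewrite expn_gt0.
have := ler_log2_nat pow_gt0 (ltnW (up_log_gtn (isT : (1 < 2)%N) lt_1m)).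
have log2_2 : log2 2%:R = 1 by rewrite /log2 mulfV ?gt_eqF ?ln2_gt0.
rewrite log2_natX // log2_2 mulr1 -(@prednK (up_log 2 m)) ?up_log_gt0 ?lt_1m //.
by rewrite -natr1 /=; lra.
Qed.

Definition xlog2 (x : nat) : Rdefinitions.R := x%:R * log2 x%:R.

Lemma log2_expn_self x : log2 (x ^ x)%:R = xlog2 x.
Proof. by case: x => [|x]; [rewrite /xlog2 mul0r; exact: log2_1 | rewrite log2_natX]. Qed.

(* N h(M / N), with h the binary entropy function *)
Definition binomial_entropy (N M : nat) : Rdefinitions.R :=
  xlog2 N - xlog2 M - xlog2 (N - M).

Lemma log2_bin_le N M : (M <= N)%N -> log2 'C(N, M)%:R <= binomial_entropy N M.
Proof.
move=> le_MN; have selfX_gt0 x : (0 < x ^ x)%N by case: x => // x; rewrite expn_gt0.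
have := ler_log2_nat _ (bin_mul_expn_leq N M).
rewrite !log2_natM ?muln_gt0 ?bin_gt0 ?selfX_gt0 // !log2_expn_self.
by rewrite le_MN /binomial_entropy => /(_ isT); lra.
Qed.

Let mul_hterm N a b : (0 < N)%N -> (0 < a)%N ->
  N%:R * hterm N a b = b%:R * log2 a%:R - xlog2 b.
Proof.
move=> N_gt0 a_gt0; rewrite /hterm /xlog2; case: eqP => [-> | /eqP b_neq0].
  by rewrite mulr0 !mul0r subrr.
rewrite log2_div_nat // ?lt0n //; field.
by rewrite pnatr_eq0 -lt0n.
Qed.

Lemma mul_hterm_compl N a b : (0 < N)%N -> (0 < a)%N -> (b <= a)%N ->
  N%:R * (hterm N a b + hterm N a (a - b)) = binomial_entropy a b.
Proof.
move=> N_gt0 a_gt0 le_ba; rewrite mulrDr !mul_hterm // natrB //.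
by rewrite /binomial_entropy /xlog2; ring.
Qed.

End Log2.

Section Counts.
Variables (sigma k : nat).
Implicit Types (S : {fset (seq 'I_sigma)}) (w : seq (option 'I_sigma)).

Lemma n_wE S w : n_w k S w = count (fun u => ctx k u == w) S.
Proof. exact: card_sep_fset. Qed.

Lemma n_wcE S w c : n_wc k S w c = count (fun u => (ctx k u == w) && out S u c) S.
Proof. exact: card_sep_fset. Qed.

Lemma n_wc_le S w c : n_wc k S w c <= n_w k S w.
Proof. by rewrite n_wcE n_wE; apply: sub_count => u /andP []. Qed.

Lemma n_wc_lt_card S w c : is_trie S -> n_wc k S w c < #|` S|.
Proof.
move=> hS; rewrite /n_wc; set A := [fset u in S | _].
have <- : #|` (rcons^~ c) @` A| = #|` A| := card_imfset _ _ (rcons_injl c).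
rewrite [X in _ < X](cardfsD1 [::]) trie_nil // add1n ltnS; apply/fsubset_leq_card/fsubsetP.
move=> _ /imfsetP [u /= + ->]; rewrite !inE /out => /and3P [_ _ ->].
by rewrite andbT -size_eq0 size_rcons.
Qed.

Lemma n_w_rcons S w a : 0 < k -> is_trie S ->
  n_w k S (rcons w (Some a)) = \sum_(o : option 'I_sigma) n_wc k S (o :: w) a.
Proof.
move=> k_gt0 hS; pose parents := [fset p in S | out S p a && (behead (ctx k p) == w)].
rewrite /n_w; have -> : [fset u in S | ctx k u == rcons w (Some a)] = (rcons^~ a) @` parents.
  apply/fsetP => u; rewrite inE; apply/andP/imfsetP => [[uS] | [p /= + ->]].
    case/lastP: u uS => [_ | p b pbS]; first rewrite /ctx subn0 cats0.
      move=> /eqP /(congr1 (fun s => Some a \in s)).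
      by rewrite mem_nseq mem_rcons inE eqxx andbF.
    rewrite ctx_rcons // eqseq_rcons => /andP [/eqP ctx_p /eqP [b_a]]; subst b.
    exists p => //; rewrite !inE /out -ctx_pred // ctx_p eqxx andbT.
    by apply/andP; split; [exact: trie_rcons hS pbS | exact: pbS].
  rewrite !inE /out => /and3P [_ pa /eqP ctx_p].
  by rewrite pa ctx_rcons // ctx_pred // ctx_p.
have -> : #|` (rcons^~ a) @` parents| = #|` parents| := card_imfset _ _ (rcons_injl a).
rewrite card_sep_fset (count_partition (fun p => head None (ctx k p))).
apply: eq_bigr => o _; rewrite n_wcE; apply: eq_count => p /=.
have : size (ctx k p) = k := size_ctx k p.
case: (ctx k p) => [/esym k_eq0 | o' w' _] /=; first by rewrite k_eq0 in k_gt0.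
by rewrite eqseq_cons; case: (out S p a) (w' == w) (o' == o) => [] [] [].
Qed.

End Counts.

Section Entropy.
Variables (sigma k : nat).
Implicit Types (S : {fset (seq 'I_sigma)}) (w : seq (option 'I_sigma)).

Lemma mem_contexts S w : (w \in contexts k S) = (0 < n_w k S w).
Proof.
rewrite /contexts mem_undup n_wE -has_count.
apply/mapP/hasP => -[u uS ctx_u]; exists u => //; first by rewrite ctx_u.
exact/esym/eqP.
Qed.

Local Open Scope ring_scope.

Lemma mul_Hk S : is_trie S ->
  #|` S|%:R * Hk k S =
  \sum_(p : k.-tuple (option 'I_sigma) * 'I_sigma)
     binomial_entropy (n_w k S p.1) (n_wc k S p.1 p.2).
Proof.
move=> hS; have card_gt0 : (0 < #|` S|)%N by rewrite (cardfsD1 [::]) trie_nil.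
rewrite /Hk mulr_sumr -(pair_bigA _ (fun (t : k.-tuple _) c =>
  binomial_entropy (n_w k S t) (n_wc k S t c))) /=.
set G := fun w => \sum_(c < sigma) binomial_entropy (n_w k S w) (n_wc k S w c).
have -> : \sum_(t : k.-tuple (option 'I_sigma)) G t = \sum_(w <- words _ k) G w.
  by rewrite big_map big_enum.
rewrite -(@big_uniq_subset _ _ (contexts k S) _ _ (undup_uniq _) (uniq_words _ _)); last first.
- move=> w; rewrite mem_contexts lt0n negbK => /eqP n_w0.
  apply: big1 => c _; have := n_wc_le k S w c; rewrite n_w0 leqn0 => /eqP ->.
  by rewrite /binomial_entropy /xlog2 !mul0r !subr0.
- by move=> w; rewrite mem_undup => /mapP [u _ ->]; rewrite mem_words size_ctx.
apply: eq_big_seq => w; rewrite mem_contexts => n_w_gt0; rewrite mulr_sumr.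
by apply: eq_bigr => c _; rewrite mul_hterm_compl // n_wc_le.
Qed.

Definition block_counts S : seq (nat * nat) :=
  [seq (n_w k S p.1, n_wc k S p.1 p.2) | p : k.-tuple (option 'I_sigma) * 'I_sigma].

Lemma log2_size_families_le S : is_trie S ->
  log2 (size (bitseq_families (block_counts S)))%:R <= #|` S|%:R * Hk k S.
Proof.
move=> hS; rewrite size_bitseq_families big_map big_enum /= log2_nat_prod; last first.
  by move=> p; rewrite bin_gt0; exact: n_wc_le.
by rewrite mul_Hk //; apply: ler_sum => p _; apply: log2_bin_le; exact: n_wc_le.
Qed.

Lemma mul_Hk_ge0 S : is_trie S -> 0 <= #|` S|%:R * Hk k S.
Proof.
move=> hS; apply: le_trans (log2_size_families_le hS); apply: log2_nat_ge0.
by rewrite size_bitseq_families big_map prodn_gt0 // => p; rewrite bin_gt0; exact: n_wc_le.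
Qed.

End Entropy.

Section Shallow.
Variables (sigma k : nat) (S1 S2 : {fset (seq 'I_sigma)}).
Hypothesis shallow_agree : forall u, size u <= k -> (u \in S1) = (u \in S2).

Lemma shallow_n_w w : None \in w -> n_w k S1 w = n_w k S2 w.
Proof.
move=> None_w; rewrite /n_w; congr #|` _|; apply/fsetP => u; rewrite !inE.
have [ctx_u | _] := eqVneq (ctx k u) w; last by rewrite !andbF.
by rewrite !andbT shallow_agree // ltnW // -None_in_ctx ctx_u.
Qed.

Lemma shallow_n_wc w c : None \in w -> n_wc k S1 w c = n_wc k S2 w c.
Proof.
move=> None_w; rewrite /n_wc; congr #|` _|; apply/fsetP => u; rewrite !inE /out.
have [ctx_u | _] := eqVneq (ctx k u) w; last by rewrite !andbF.
have lt_uk : size u < k by rewrite -None_in_ctx ctx_u.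
by rewrite !shallow_agree ?size_rcons // ltnW.
Qed.

End Shallow.

Section Encoding.
Variables sigma n k : nat.
Implicit Types (S : {fset (seq 'I_sigma)}) (u : seq 'I_sigma).

Local Notation width := (up_log 2 n).

Definition bfs_order : seq (seq 'I_sigma) :=
  sort (relpre size leq) (undup (flatten [seq words 'I_sigma d | d <- iota 0 n])).

Lemma trie_sub_bfs_order S : is_trie S -> #|` S| = n -> {subset S <= bfs_order}.
Proof.
move=> hS card_S u uS; rewrite mem_sort mem_undup; apply/flattenP.
exists (words _ (size u)); rewrite ?mem_words //.
by apply: map_f; rewrite mem_iota -card_S size_lt_card_trie.
Qed.

Definition block S w c := trie_block (ctx k) bfs_order S w c.

Definition blocks S : seq bitseq :=
  [seq block S p.1 p.2 | p : k.-tuple (option 'I_sigma) * 'I_sigma].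

Lemma block_counts_blocks S : is_trie S -> #|` S| = n ->
  block_counts k S = [seq (size b, count id b) | b <- blocks S].
Proof.
move=> hS card_S; rewrite -map_comp; apply: eq_map => p /=.
have uniq_bfs : uniq bfs_order by rewrite sort_uniq undup_uniq.
have sub_bfs := trie_sub_bfs_order hS card_S.
rewrite size_map size_filter count_map count_filter count_mem_fset // -n_wE.
rewrite n_wcE -(count_mem_fset _ uniq_bfs sub_bfs); congr (_, _).
by apply: eq_count => u /=; rewrite /out [RHS]andbC andbA.
Qed.

Lemma blocks_in_families S : is_trie S -> #|` S| = n ->
  blocks S \in bitseq_families (block_counts k S).
Proof. by move=> hS card_S; rewrite block_counts_blocks // mem_bitseq_families. Qed.

(* The root is always a node, and no node is deeper than n - 1. *)
Definition shallow_words : seq (seq 'I_sigma) :=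
  flatten [seq words 'I_sigma d | d <- iota 1 (minn k n.-1)].

Definition shallow_bits S : bitseq := [seq u \in S | u <- shallow_words].

Definition count_bits S : bitseq :=
  flatten [seq binary width (n_wc k S (map Some p.1) p.2) | p : k.-tuple 'I_sigma * 'I_sigma].

Definition rank_bits S : bitseq :=
  let fams := bitseq_families (block_counts k S) in
  binary (up_log 2 (size fams)) (index (blocks S) fams).

Definition trie_code S : bitseq := shallow_bits S ++ count_bits S ++ rank_bits S.

Section Decoding.
Variables S1 S2 : {fset (seq 'I_sigma)}.
Hypotheses (trie1 : is_trie S1) (trie2 : is_trie S2).
Hypotheses (card1 : #|` S1| = n) (card2 : #|` S2| = n).

Lemma shallow_bits_agree : shallow_bits S1 = shallow_bits S2 ->
  forall u, size u <= k -> (u \in S1) = (u \in S2).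
Proof.
move=> /eq_in_map eq_bits u le_uk; have [-> | u_nil] := eqVneq u [::].
  by rewrite !trie_nil.
have [le_nu | lt_un] := leqP n (size u).
  have notin S : is_trie S -> #|` S| = n -> u \notin S.
    move=> hS card_S; apply: contraTN le_nu => /(size_lt_card_trie hS).
    by rewrite card_S -ltnNge.
  by rewrite (negbTE (notin _ trie1 card1)) (negbTE (notin _ trie2 card2)).
apply: eq_bits; apply/flattenP; exists (words _ (size u)); rewrite ?mem_words //.
have size_u_gt0 : 0 < size u by rewrite lt0n size_eq0.
by apply: map_f; rewrite mem_iota; lia.
Qed.

Lemma count_bits_agree : count_bits S1 = count_bits S2 ->
  forall x c, size x = k -> n_wc k S1 (map Some x) c = n_wc k S2 (map Some x) c.
Proof.
move=> /eq_from_flatten_shape eq_bits x c size_x.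
have /eq_bits /eq_in_map : shape [seq binary width (n_wc k S1 (map Some p.1) p.2)
                                   | p : k.-tuple 'I_sigma * 'I_sigma]
                       = shape [seq binary width (n_wc k S2 (map Some p.1) p.2)
                                   | p : k.-tuple 'I_sigma * 'I_sigma].
  by rewrite /shape -!map_comp; apply: eq_map => p /=; rewrite !size_binary.
move=> /(_ (Tuple (introT eqP size_x), c) (mem_enum _ _)) /= /binary_inj; apply.
  by apply: leq_trans (up_logP _ _) => //; rewrite -card1 n_wc_lt_card.
by apply: leq_trans (up_logP _ _) => //; rewrite -card2 n_wc_lt_card.
Qed.

Section Agreement.
Hypothesis shallow : forall u, size u <= k -> (u \in S1) = (u \in S2).
Hypothesis full : forall x c, size x = k ->
  n_wc k S1 (map Some x) c = n_wc k S2 (map Some x) c.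

Lemma n_wc_agree w c : size w = k -> n_wc k S1 w c = n_wc k S2 w c.
Proof.
move=> size_w; have [None_w | Some_w] := boolP (None \in w); first exact: shallow_n_wc.
have size_x : size (pmap id w) = k by rewrite -size_w -[in RHS](map_Some_pmap Some_w) size_map.
by rewrite -(map_Some_pmap Some_w) full.
Qed.

Lemma n_w_agree w : size w = k -> n_w k S1 w = n_w k S2 w.
Proof.
move=> size_w; have [None_w | Some_w] := boolP (None \in w); first exact: shallow_n_w.
have [k_eq0 | k_gt0] := posnP k.
  have n_w_all S : #|` S| = n -> n_w k S w = n.
    move=> <-; rewrite n_wE -size_filter; congr size; apply/all_filterP/allP => u _.
    by rewrite k_eq0 ctx0; move: size_w; rewrite k_eq0 => /size0nil ->.
  by rewrite !n_w_all.
case/lastP: w size_w Some_w => [size_w | w [a|] size_w]; last by rewrite mem_rcons inE eqxx.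
  by move: k_gt0; rewrite -size_w.
move=> _; rewrite !n_w_rcons //; apply: eq_bigr => o _; apply: n_wc_agree.
by move: size_w; rewrite size_rcons /=.
Qed.

End Agreement.

Lemma block_counts_agree :
  shallow_bits S1 = shallow_bits S2 -> count_bits S1 = count_bits S2 ->
  block_counts k S1 = block_counts k S2.
Proof.
move=> /shallow_bits_agree shallow /count_bits_agree full.
by apply/eq_map => p; rewrite (n_w_agree shallow) ?(n_wc_agree shallow full) ?size_tuple.
Qed.

Lemma blocks_agree : block_counts k S1 = block_counts k S2 ->
  rank_bits S1 = rank_bits S2 -> blocks S1 = blocks S2.
Proof.
move=> eq_counts; rewrite /rank_bits -eq_counts.
have := blocks_in_families trie1 card1; have := blocks_in_families trie2 card2.
rewrite -eq_counts; set fams := bitseq_families _ => fam2 fam1.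
have index_lt S : blocks S \in fams -> index (blocks S) fams < 2 ^ up_log 2 (size fams).
  by move=> famS; apply: leq_trans (up_logP _ _) => //; rewrite index_mem.
move=> /(binary_inj (index_lt _ fam1) (index_lt _ fam2)) eq_index.
by rewrite -(nth_index [::] fam1) -(nth_index [::] fam2) eq_index.
Qed.

Lemma block_agree : blocks S1 = blocks S2 -> forall w c, block S1 w c = block S2 w c.
Proof.
move=> /eq_in_map eq_blocks w c; have [size_w | size_w] := eqVneq (size w) k.
  exact: (eq_blocks (Tuple (introT eqP size_w), c) (mem_enum _ _)).
have no_ctx S : block S w c = [::].
  apply/eqP; rewrite -size_eq0 size_map size_filter -leqn0 leqNgt -has_count.
  by apply/hasPn => u _; apply: contra size_w => /andP [_ /eqP <-]; rewrite size_ctx.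
by rewrite !no_ctx.
Qed.

End Decoding.

Lemma size_count_bits S : size (count_bits S) = sigma ^ k * sigma * width.
Proof.
rewrite size_flatten /shape -map_comp sumnE big_map.
under eq_bigr do rewrite /= size_binary.
by rewrite big_const_seq count_predT -cardE card_prod card_tuple !card_ord iter_addn_0 mulnC.
Qed.

Lemma trie_code_inj S1 S2 : is_trie S1 -> is_trie S2 -> #|` S1| = n -> #|` S2| = n ->
  trie_code S1 = trie_code S2 -> S1 = S2.
Proof.
move=> trie1 trie2 card1 card2 /eqP; rewrite eqseq_cat ?size_map // => /andP [/eqP eq_shallow].
rewrite eqseq_cat ?size_count_bits // => /andP [/eqP eq_counts /eqP eq_rank].
have eq_blocks := blocks_agree trie1 trie2 card1 card2
  (block_counts_agree trie1 trie2 card1 card2 eq_shallow eq_counts) eq_rank.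
apply: (trie_eq_of_blocks (key := ctx k) (E := bfs_order)) => //.
- by apply: sort_sorted => u v; exact: leq_total.
- exact: trie_sub_bfs_order.
- exact: trie_sub_bfs_order.
exact: block_agree eq_blocks.
Qed.

Lemma size_shallow_words_le : 1 < sigma ->
  size shallow_words <= 1 + sigma ^ k * width.
Proof.
move=> sigma_gt1; rewrite size_flatten /shape -map_comp sumnE big_map.
under eq_bigr do rewrite /= size_words card_ord.
set m := minn k n.-1; have [-> | m_gt0] := posnP m; first by rewrite big_nil.
have le_mk : sigma ^ m <= sigma ^ k by rewrite leq_pexp2l ?geq_minl //; lia.
have n_le_pow := up_logP n (isT : 1 < 2).
have [le_n2 | lt_2n] := leqP n 2.
  have [n2 m1] : n = 2 /\ m = 1 by rewrite /m in m_gt0 *; lia.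
  by move: le_mk; rewrite m1 n2 up_lognn // big_seq1 !expn1 muln1; lia.
have width_ge2 : 2 <= width.
  by move: n_le_pow; case: width => [|[|w]] //; rewrite ?expn0 ?expn1; lia.
have := sum_expn_iota1_le m sigma_gt1.
have : sigma ^ k * 2 <= sigma ^ k * width by rewrite leq_mul2l width_ge2 orbT.
by lia.
Qed.

Local Open Scope ring_scope.

Lemma size_trie_code_le S : (1 < sigma)%N -> is_trie S -> #|` S| = n ->
  (size (trie_code S))%:R <= n%:R * Hk k S + 2 + ((sigma + 1) * sigma ^ k * width)%:R.
Proof.
move=> sigma_gt1 hS card_S.
rewrite /trie_code !size_cat size_map size_count_bits /rank_bits size_binary.
have fams_gt0 : (0 < size (bitseq_families (block_counts k S)))%N.
  by case: (bitseq_families _) (blocks_in_families hS card_S).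
set fams := bitseq_families _.
have log_fams := up_log2_le fams_gt0.
have := log2_size_families_le k hS; rewrite card_S -/fams => entropy_fams.
have : (size shallow_words + sigma ^ k * sigma * width + 1
         <= 2 + (sigma + 1) * sigma ^ k * width)%N.
  by have := size_shallow_words_le sigma_gt1; rewrite mulnDl mul1n [(sigma * _)%N]mulnC; lia.
by rewrite -(ler_nat Rdefinitions.R) !natrD; lra.
Qed.

End Encoding.

Section UnaryAlphabet.
Variable sigma : nat.
Hypothesis le_sigma1 : sigma <= 1.
Implicit Types (S : {fset (seq 'I_sigma)}) (u v : seq 'I_sigma).

Lemma unary_size_inj u v : size u = size v -> u = v.
Proof.
elim: u v => [|a u IH] [|b v] //= [size_uv]; congr (_ :: _); last exact: IH.
by apply: ord_inj; have := ltn_ord a; have := ltn_ord b; lia.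
Qed.

Lemma unary_trie_fsubset S1 S2 u : is_trie S1 -> is_trie S2 ->
  u \in S1 -> u \notin S2 -> S2 `<=` S1.
Proof.
move=> trie1 trie2 u1 u2; apply/fsubsetP => v v2.
have [le_vu | lt_uv] := leqP (size v) (size u).
  by rewrite (@unary_size_inj v (take (size v) u)) ?size_takel ?trie_take.
have u_prefix : u = take (size u) v by apply: unary_size_inj; rewrite size_takel // ltnW.
by rewrite u_prefix trie_take in u2.
Qed.

Lemma unary_trie_eq S1 S2 : is_trie S1 -> is_trie S2 -> #|` S1| = #|` S2| -> S1 = S2.
Proof.
move=> trie1 trie2 card12; apply/eqP.
have [sub12 | /fsubsetPn [u u1 u2]] := boolP (S1 `<=` S2).
  by rewrite eqEfcard sub12 card12 leqnn.
by rewrite eq_sym eqEfcard (unary_trie_fsubset trie1 trie2 u1 u2) card12 leqnn.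
Qed.

End UnaryAlphabet.

Theorem theorem2 (sigma n k : nat) :
  exists enc : {fset (seq 'I_sigma)} -> seq bool,
    (forall S1 S2 : {fset (seq 'I_sigma)},
        is_trie S1 -> is_trie S2 -> nnodes S1 = n -> nnodes S2 = n ->
        enc S1 = enc S2 -> S1 = S2) /\
    (forall S : {fset (seq 'I_sigma)},
        is_trie S -> nnodes S = n ->
        ((size (enc S))%:R <=
           n%:R * Hk k S + 2 + ((sigma + 1) * sigma ^ k * up_log 2 n)%:R)%R).
Proof.
have [le_sigma1 | lt_1sigma] := leqP sigma 1; last first.
  by exists (trie_code n k); split=> [|S]; [exact: trie_code_inj | exact: size_trie_code_le].
exists (fun=> [::]); split=> [S1 S2 trie1 trie2 card1 card2 _ | S hS card_S].
  by apply: unary_trie_eq => //; rewrite -/(nnodes S1) -/(nnodes S2) card1 card2.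
have := mul_Hk_ge0 k hS; rewrite [#|` S|]card_S /=.
have : (0 <= ((sigma + 1) * sigma ^ k * up_log 2 n)%:R :> Rdefinitions.R)%R by rewrite ler0n.
by rewrite mulr0n; lra.
Qed.
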